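(* In the setting described in the context, let $(x^k)_{k\in\mathbb N}$ be the sequence generated by Method 2. Then $(x^k)$ is bounded; moreover, with $\bar x:=P_{\operatorname{zer}(A+B)}(x^0)$ and $\rho:=\operatorname{dist}(x^0,\operatorname{zer}(A+B))$, $$(x^k)_{k\in\mathbb N}\subset\mathbb B\Big[\tfrac12(x^0+\bar x);\tfrac12\rho\Big],$$ where $\mathbb B[x;\gamma]:=\{y\in\mathcal H:\|y-x\|\le\gamma\}$.
   Context: Let $\mathcal H$ be a real Hilbert space with inner product $\langle\cdot,\cdot\rangle$ and norm $\|\cdot\|$. Let $A_1:\mathcal H\to\mathcal H$ be $\beta$-cocoercive for some $\beta>0$ (i.e. $\langle A_1x-A_1y,x-y\rangle\ge\beta\|A_1x-A_1y\|^2$ for all $x,y$), let $A_2:\mathcal H\to\mathcal H$ be maximally monotone and uniformly continuous, let $B:\mathcal H\rightrightarrows\mathcal H$ be maximally monotone, and set $A:=A_1+A_2$. Assume $\operatorname{zer}(A+B):=\{x:0\in Ax+Bx\}\neq\emptyset$. $J_{\alpha B}:=(I+\alpha B)^{-1}$ for $\alpha>0$, and $P_C$ denotes the orthogonal projection onto a nonempty closed convex set $C$. Fix $\theta,\delta\in(0,1)$, $\bar\delta>0$ with $1-\delta-\bar\delta>0$, and $\alpha_{-1}>0$ with $\alpha_{-1}\le4\beta\bar\delta$. Conceptual Algorithm: pick $x^0\in\mathcal H$. Given $x^k$ and $\alpha_{k-1}$, for $j\in\mathbb N$ let $\bar x^k_j:=J_{\alpha_{k-1}\theta^jB}(x^k-\alpha_{k-1}\theta^jAx^k)$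 and let $j(k)$ be the smallest $j\in\mathbb N$ with $\alpha_{k-1}\theta^j\langle A_2x^k-A_2\bar x^k_j,x^k-\bar x^k_j\rangle\le\delta\|x^k-\bar x^k_j\|^2$. Set $\alpha_k:=\alpha_{k-1}\theta^{j(k)}$, $\bar x^k:=J_{\alpha_kB}(x^k-\alpha_kAx^k)$, $r_k:=\frac{\bar\delta}{\alpha_k}\|x^k-\bar x^k\|^2$, $T_k:=\{x\in\mathcal H:\langle \frac{x^k-\bar x^k}{\alpha_k}-(A_2x^k-A_2\bar x^k),x-\bar x^k\rangle\le r_k\}$ and $\Gamma_k:=\{x\in\mathcal H:\langle x^0-x^k,x-x^k\rangle\le0\}$. Method 2 sets $x^{k+1}:=P_{T_k\cap\Gamma_k}(x^0)$ and stops if $x^{k+1}=x^k$. *)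

From HB Require Import structures.
From mathcomp Require Import all_boot all_order all_algebra.
From mathcomp Require Import classical_sets reals.
Set Implicit Arguments. Unset Strict Implicit. Unset Printing Implicit Defensive.
Import Order.TTheory GRing.Theory Num.Theory.
Local Open Scope ring_scope.
Local Open Scope classical_set_scope.

Section Hilbert.
Variables (R : realType) (V : lmodType R) (ip : V -> V -> R).

Record inner_product : Prop := InnerProduct {
  ip_sym : forall x y, ip x y = ip y x;
  ip_linl : forall (a : R) x y z, ip (a *: x + y) z = a * ip x z + ip y z;
  ip_ge0 : forall x, 0 <= ip x x;
  ip_eq0 : forall x, ip x x = 0 -> x = 0 }.

Definition hnorm (x : V) : R := Num.sqrt (ip x x).

Definition cauchy_seq (u : nat -> V) : Prop :=
  forall e : R, 0 < e -> exists N : nat, forall m n : nat,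
    (N <= m)%N -> (N <= n)%N -> hnorm (u m - u n) < e.

Definition converges_to (u : nat -> V) (l : V) : Prop :=
  forall e : R, 0 < e -> exists N : nat, forall n : nat, (N <= n)%N -> hnorm (u n - l) < e.

Definition hilbert : Prop :=
  inner_product /\ forall u, cauchy_seq u -> exists l, converges_to u l.

(* set-valued operators are relations: B x u means u \in B x *)
Definition monotone_op (B : V -> V -> Prop) : Prop :=
  forall x y u v, B x u -> B y v -> 0 <= ip (u - v) (x - y).

Definition maximally_monotone (B : V -> V -> Prop) : Prop :=
  monotone_op B /\
  forall x u, (forall y v, B y v -> 0 <= ip (u - v) (x - y)) -> B x u.

Definition graph (A : V -> V) : V -> V -> Prop := fun x u => u = A x.

Definition cocoercive (beta : R) (A : V -> V) : Prop :=
  forall x y, beta * hnorm (A x - A y) ^+ 2 <= ip (A x - A y) (x - y).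

Definition unif_continuous (A : V -> V) : Prop :=
  forall e : R, 0 < e -> exists d : R, 0 < d /\
    forall x y, hnorm (x - y) < d -> hnorm (A x - A y) < e.

(* p = J_{a B} z, i.e. z \in p + a B p *)
Definition resolvent (B : V -> V -> Prop) (a : R) (z p : V) : Prop :=
  B p (a^-1 *: (z - p)).

Definition zer_sum (A : V -> V) (B : V -> V -> Prop) : set V :=
  [set x | B x (- A x)].

Definition is_proj (C : set V) (x p : V) : Prop :=
  C p /\ forall y, C y -> hnorm (x - p) <= hnorm (x - y).

Definition dist_set (x : V) (C : set V) : R :=
  inf [set hnorm (x - y) | y in C].

Definition cball (c : V) (g : R) : set V := [set y | hnorm (y - c) <= g].

Definition Tset (A2 : V -> V) (dbar a : R) (xk xbk : V) : set V :=
  [set x | ip (a^-1 *: (xk - xbk) - (A2 xk - A2 xbk)) (x - xbk)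
           <= dbar / a * hnorm (xk - xbk) ^+ 2].

Definition Gset (x0 xk : V) : set V := [set x | ip (x0 - xk) (x - xk) <= 0].

Definition ls_ok (A2 : V -> V) (delta s : R) (x p : V) : Prop :=
  s * ip (A2 x - A2 p) (x - p) <= delta * hnorm (x - p) ^+ 2.

(* One step k of Method 2 (with Conceptual Algorithm line search):
   given x^k and alpha_{k-1} (aprev), it produces alpha_k = aprev * theta^j(k),
   xbar^k = J_{alpha_k B}(x^k - alpha_k A x^k), and x^{k+1} = P_{T_k cap Gamma_k}(x^0). *)
Definition method2_step (A1 A2 : V -> V) (B : V -> V -> Prop)
    (theta delta dbar : R) (x0 xk : V) (aprev ak : R) (xbk xk1 : V) : Prop :=
  exists j : nat,
    [/\ ak = aprev * theta ^+ j,
        resolvent B ak (xk - ak *: (A1 xk + A2 xk)) xbk,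
        ls_ok A2 delta ak xk xbk,
        (forall i : nat, (i < j)%N -> forall p : V,
            resolvent B (aprev * theta ^+ i)
              (xk - (aprev * theta ^+ i) *: (A1 xk + A2 xk)) p ->
            ~ ls_ok A2 delta (aprev * theta ^+ i) xk p) &
        is_proj (Tset A2 dbar ak xk xbk `&` Gset x0 xk) x0 xk1].

End Hilbert.

(* Every zero z of A + B lies in each T_k (by cocoercivity of A_1, monotonicity
   of A_2 and B, and alpha_k <= alpha_{-1} <= 4 beta dbar), and inductively in each
   Gamma_k: if z lies in the convex set T_k cap Gamma_k, the variational
   characterization of x^{k+1} = P_{T_k cap Gamma_k}(x^0) gives
   <x^0 - x^{k+1}, z - x^{k+1}> <= 0, i.e. z is in Gamma_{k+1}.  Taking z = xbar,
   the identity
   |y - (x^0 + xbar)/2|^2 = |x^0 - xbar|^2 / 4 + <x^0 - y, xbar - y>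
   puts every iterate in the ball of the statement, and |x^0 - xbar| = rho. *)
From HB Require Import structures.
From mathcomp Require Import all_boot all_order all_algebra.
From mathcomp Require Import classical_sets reals.
From mathcomp Require Import lra.
Import Order.TTheory GRing.Theory Num.Theory.
Local Open Scope ring_scope.
Local Open Scope classical_set_scope.

Section InnerProduct.
Context {R : realType} {V : lmodType R} {ip : V -> V -> R}.
Hypothesis hip : inner_product ip.

Definition convex_set (C : set V) : Prop :=
  forall p z t, C p -> C z -> 0 <= t <= 1 -> C (p + t *: (z - p)).

Lemma convex_setI (C D : set V) :
  convex_set C -> convex_set D -> convex_set (C `&` D).
Proof. by move=> cC cD p z t [Cp Dp] [Cz Dz] t01; split; [apply: cC | apply: cD]. Qed.

Lemma ipDl x y z : ip (x + y) z = ip x z + ip y z.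
Proof. by have := ip_linl hip 1 x y z; rewrite scale1r mul1r. Qed.

Lemma ip0l z : ip 0 z = 0.
Proof. by have := ipDl 0 0 z; rewrite addr0; lra. Qed.

Lemma ipZl a x z : ip (a *: x) z = a * ip x z.
Proof. by have := ip_linl hip a x 0 z; rewrite !addr0 ip0l addr0. Qed.

Lemma ipNl x z : ip (- x) z = - ip x z.
Proof. by rewrite -scaleN1r ipZl mulN1r. Qed.

Lemma ipBl x y z : ip (x - y) z = ip x z - ip y z.
Proof. by rewrite ipDl ipNl. Qed.

Lemma ipDr x y z : ip z (x + y) = ip z x + ip z y.
Proof. by rewrite !(ip_sym hip z) ipDl. Qed.

Lemma ipZr a x z : ip z (a *: x) = a * ip z x.
Proof. by rewrite !(ip_sym hip z) ipZl. Qed.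

Lemma ipNr x z : ip z (- x) = - ip z x.
Proof. by rewrite !(ip_sym hip z) ipNl. Qed.

Lemma ipBr x y z : ip z (x - y) = ip z x - ip z y.
Proof. by rewrite ipDr ipNr. Qed.

Lemma hnorm_ge0 x : 0 <= hnorm ip x.
Proof. exact: sqrtr_ge0. Qed.

Lemma hnorm_sqr x : hnorm ip x ^+ 2 = ip x x.
Proof. by rewrite sqr_sqrtr // ip_ge0. Qed.

Lemma hnorm_le x y : (hnorm ip x <= hnorm ip y) = (ip x x <= ip y y).
Proof. by rewrite ler_sqrt // ip_ge0. Qed.

Lemma ip_subZ d e k :
  ip (d - k *: e) (d - k *: e) = ip d d - 2 * k * ip d e + k ^+ 2 * ip e e.
Proof. by rewrite ipBl !ipBr !ipZl !ipZr (ip_sym hip e d) expr2; lra. Qed.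

Lemma ip_young b g d : 0 < b -> ip g d <= b * ip g g + ip d d / (4 * b).
Proof.
move=> b0; have b4 : 0 < 4 * b by rewrite mulr_gt0.
rewrite -(ler_pM2l b4) mulrDr (mulrCA _ (ip d d)) mulfV ?gt_eqF // mulr1.
have := ip_ge0 hip (d - (2 * b) *: g); rewrite ip_subZ (ip_sym hip d g) expr2.
nra.
Qed.

Lemma ip_sub_midpoint a b y :
  ip (y - 2^-1 *: (a + b)) (y - 2^-1 *: (a + b)) =
  2^-1 ^+ 2 * ip (a - b) (a - b) + ip (a - y) (b - y).
Proof.
rewrite !(ipBl, ipBr, ipDl, ipDr, ipZl, ipZr) expr2.
rewrite (ip_sym hip a y) (ip_sym hip b y) (ip_sym hip b a).
lra.
Qed.

Lemma cball_midpoint a b y : ip (a - y) (b - y) <= 0 ->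
  cball ip (2^-1 *: (a + b)) (2^-1 * hnorm ip (a - b)) y.
Proof.
move=> hy; rewrite /cball /= -(ler_sqr (hnorm_ge0 _)); last first.
  by rewrite nnegrE mulr_ge0 ?invr_ge0 ?hnorm_ge0.
by rewrite exprMn !hnorm_sqr ip_sub_midpoint gerDl.
Qed.

Lemma halfspace_convex w q r : convex_set [set z | ip w (z - q) <= r].
Proof.
move=> p z t /= hp hz /andP[t0 t1].
have -> : p + t *: (z - p) - q = (p - q) + t *: ((z - q) - (p - q)).
  by rewrite opprB addrA subrK addrAC.
rewrite ipDr ipZr (ipBr (z - q)).
have : 0 <= t * (r - ip w (z - q)) by rewrite mulr_ge0 // subr_ge0.
have : 0 <= (1 - t) * (r - ip w (p - q)) by rewrite mulr_ge0 // subr_ge0.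
lra.
Qed.

Lemma is_proj_variational (C : set V) x p z :
  convex_set C -> is_proj ip C x p -> C z -> ip (x - p) (z - p) <= 0.
Proof.
move=> convC [Cp minp] Cz.
set s := ip (x - p) (z - p); set q := ip (z - p) (z - p).
rewrite leNgt; apply/negP => s0.
have q0 : 0 <= q by apply: ip_ge0.
have sq0 : 0 < s + q by rewrite ltr_wpDr.
pose t := s / (s + q).
have ht : t * (s + q) = s by rewrite /t mulfVK ?gt_eqF.
have t0 : 0 < t by rewrite divr_gt0.
have t1 : t <= 1 by rewrite ler_pdivrMr // mul1r lerDl.
have t01 : 0 <= t <= 1 by rewrite ltW.
have := minp _ (convC _ _ t Cp Cz t01).
rewrite opprD addrA hnorm_le ip_subZ -/s -/q => hmin.
(* minimality at p + t (z - p) forces 2 s <= t q, whereas t q = s - t s *)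
have : 2 * s <= t * q by nra.
nra.
Qed.

Lemma dist_set_proj {C : set V} {x p : V} :
  is_proj ip C x p -> dist_set ip x C = hnorm ip (x - p).
Proof.
move=> [Cp minp]; apply/eqP; rewrite eq_le; apply/andP; split.
  apply: ge_inf; last by exists p.
  by exists 0 => _ [y _ <-]; apply: hnorm_ge0.
apply: lb_le_inf; first by exists (hnorm ip (x - p)), p.
by move=> _ [y Cy <-]; apply: minp.
Qed.

Lemma ip_add_le a c : ip (a + c) (a + c) <= 2 * ip a a + 2 * ip c c.
Proof.
have := ip_ge0 hip (a - c).
by rewrite !(ipDl, ipDr, ipNl, ipNr) (ip_sym hip c a); lra.
Qed.

Lemma cball_hnorm_le c r y :
  cball ip c r y -> hnorm ip y <= Num.sqrt (2 * r ^+ 2 + 2 * ip c c).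
Proof.
rewrite /cball /= => hyc.
have r0 : 0 <= r := le_trans (hnorm_ge0 _) hyc.
have hyc2 : ip (y - c) (y - c) <= r ^+ 2.
  by rewrite -hnorm_sqr ler_sqr ?nnegrE ?hnorm_ge0.
have hc := ip_ge0 hip c.
rewrite /hnorm ler_sqrt; last by nra.
by have := ip_add_le (y - c) c; rewrite subrK; lra.
Qed.

Lemma Gset_refl x0 z : Gset ip x0 x0 z.
Proof. by rewrite /Gset /= subrr ip0l. Qed.

Lemma zer_sum_sub_Tset {A1 A2 : V -> V} {B : V -> V -> Prop} {beta dbar a : R} {x p : V} :
  0 < beta -> cocoercive ip beta A1 -> monotone_op ip (graph A2) ->
  monotone_op ip B -> 0 < a -> a <= 4 * beta * dbar ->
  resolvent B a (x - a *: (A1 x + A2 x)) p ->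
  zer_sum (fun v => A1 v + A2 v) B `<=` Tset ip A2 dbar a x p.
Proof.
move=> beta0 coA1 monA2 monB a0 a_le Bp z Bz; rewrite /Tset /=.
set d := x - p; set g := A1 x - A1 z.
have hw : ip (a^-1 *: d - (A2 x - A2 p)) (z - p) <= ip g (z - p).
  have := monB _ _ _ _ Bp Bz; have := monA2 p z _ _ erefl erefl.
  have -> : a^-1 *: (x - a *: (A1 x + A2 x) - p) = a^-1 *: d - (A1 x + A2 x).
    by rewrite /d addrAC scalerBr scalerA mulVf ?gt_eqF // scale1r.
  rewrite -(opprB z p) !ipNr !(ipBl, ipDl, ipNl, ipZl); lra.
have hg : ip g (z - p) <= ip g d - beta * ip g g.
  have -> : z - p = d - (x - z) by rewrite /d opprB [RHS]addrC addrA subrK.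
  by have := coA1 x z; rewrite hnorm_sqr -/g (ipBr d); lra.
have hd : ip d d / (4 * beta) <= dbar / a * hnorm ip d ^+ 2.
  rewrite hnorm_sqr mulrC ler_wpM2r ?ip_ge0 //.
  by rewrite ler_pdivlMr // mulrC ler_pdivrMr ?mulr_gt0 // mulrC.
have := ip_young beta g d beta0; lra.
Qed.

Lemma method2_step_invariant {A1 A2 : V -> V} {B : V -> V -> Prop}
    {theta delta beta dbar am1 : R} {x0 xk : V} {a ak : R} {xbk xk1 : V} :
  0 < beta -> cocoercive ip beta A1 -> monotone_op ip (graph A2) ->
  monotone_op ip B -> 0 < theta <= 1 -> 0 < a -> a <= am1 ->
  am1 <= 4 * beta * dbar ->
  zer_sum (fun v => A1 v + A2 v) B `<=` Gset ip x0 xk ->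
  method2_step ip A1 A2 B theta delta dbar x0 xk a ak xbk xk1 ->
  [/\ 0 < ak, ak <= am1 & zer_sum (fun v => A1 v + A2 v) B `<=` Gset ip x0 xk1].
Proof.
move=> beta0 coA1 monA2 monB /andP[th0 th1] a0 a_am am_le ZG [j [-> Bp _ _ proj]].
have ak0 : 0 < a * theta ^+ j by rewrite mulr_gt0 ?exprn_gt0.
have ak_am : a * theta ^+ j <= am1 :=
  le_trans (ler_piMr (ltW a0) (exprn_ile1 j (ltW th0) th1)) a_am.
split => // z Zz.
apply: is_proj_variational proj _; first by apply: convex_setI; apply: halfspace_convex.
split; last exact: ZG.
exact: (zer_sum_sub_Tset beta0 coA1 monA2 monB ak0 (le_trans ak_am am_le) Bp z Zz).
Qed.

End InnerProduct.

Theorem lemma4p13 (R : realType) (V : lmodType R) (ip : V -> V -> R)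
  (A1 A2 : V -> V) (B : V -> V -> Prop) (beta theta delta dbar am1 : R)
  (x : nat -> V) (alpha : nat -> R) (xb : nat -> V) (xbar : V) :
  hilbert ip ->
  0 < beta -> cocoercive ip beta A1 ->
  maximally_monotone ip (graph A2) -> unif_continuous ip A2 ->
  maximally_monotone ip B ->
  (exists z, zer_sum (fun v => A1 v + A2 v) B z) ->
  0 < theta < 1 -> 0 < delta < 1 -> 0 < dbar -> 0 < 1 - delta - dbar ->
  0 < am1 -> am1 <= 4 * beta * dbar ->
  (* x^{k+1} is computed by Method 2 as long as the method has not stopped,
     i.e. as long as x^{i+1} <> x^i for all i < k *)
  (forall k : nat, (forall i : nat, (i < k)%N -> x i.+1 <> x i) ->
     method2_step ip A1 A2 B theta delta dbar (x 0%N) (x k)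
       (if k is k'.+1 then alpha k' else am1) (alpha k) (xb k) (x k.+1)) ->
  is_proj ip (zer_sum (fun v => A1 v + A2 v) B) (x 0%N) xbar ->
  (* conclusion, for all generated iterates x^k *)
  (exists M : R, forall k : nat,
     (forall i : nat, (i.+1 < k)%N -> x i.+1 <> x i) -> hnorm ip (x k) <= M) /\
  (forall k : nat,
     (forall i : nat, (i.+1 < k)%N -> x i.+1 <> x i) ->
     cball ip (2^-1 *: (x 0%N + xbar))
       (2^-1 * dist_set ip (x 0%N) (zer_sum (fun v => A1 v + A2 v) B)) (x k)).
Proof.
move=> [hip _] beta0 coA1 [monA2 _] _ [monB _] _ /andP[th0 th1] _ _ _ am0 am_le
  step proj.
set Z := zer_sum _ B; set x0 := x 0%N.
have th01 : 0 < theta <= 1 by rewrite th0 ltW.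
have inv k : (forall i, (i < k)%N -> x i.+1 <> x i) ->
    [/\ 0 < alpha k, alpha k <= am1 & Z `<=` Gset ip x0 (x k.+1)].
  elim: k => [|k IH] run.
    apply: (method2_step_invariant hip beta0 coA1 monA2 monB th01 am0 (lexx _) am_le)
      (step 0%N run).
    by move=> z _; apply: (Gset_refl hip).
  have [ak0 ak_am ZG] := IH (fun i lt_ik => run i (ltnW lt_ik)).
  exact: (method2_step_invariant hip beta0 coA1 monA2 monB th01 ak0 ak_am am_le ZG
    (step k.+1 run)).
have xbar_G k : (forall i, (i.+1 < k)%N -> x i.+1 <> x i) -> Gset ip x0 (x k) xbar.
  case: k => [|k] run; first exact: (Gset_refl hip).
  by have [_ _ ZG] := inv k run; apply: ZG; case: proj.
have ball k : (forall i, (i.+1 < k)%N -> x i.+1 <> x i) ->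
    cball ip (2^-1 *: (x0 + xbar)) (2^-1 * hnorm ip (x0 - xbar)) (x k).
  by move=> run; apply: (cball_midpoint hip); apply: xbar_G.
split; last by move=> k run; rewrite (dist_set_proj proj); apply: ball.
by eexists => k run; apply: (cball_hnorm_le hip) (ball k run).
Qed.
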